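(* Let $G$ be a simple, undirected, connected graph on $N$ vertices with edge set $E$ and degree sequence $d_1\le d_2\le\cdots\le d_N$. Then $$R^+(G)\ge N(N-4)+2|E|\sum_{j=1}^N\frac{1}{d_j}.$$
   Context: For vertices $i,j$ of $G$, $R_{ij}$ denotes the effective resistance between $i$ and $j$ when every edge of $G$ is a unit resistor. The additive degree-Kirchhoff index is $R^+(G)=\sum_{i<j}(d_i+d_j)R_{ij}$, where $d_i$ is the degree of vertex $i$. *)

From mathcomp Require Import all_boot all_order all_algebra.
Set Implicit Arguments. Unset Strict Implicit. Unset Printing Implicit Defensive.
Import Order.TTheory GRing.Theory Num.Theory.
Local Open Scope ring_scope.

Definition simple_graph (N : nat) (e : rel 'I_N) : Prop :=
  symmetric e /\ irreflexive e.

Definition connected_graph (N : nat) (e : rel 'I_N) : Prop :=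
  forall x y : 'I_N, connect e x y.

Definition deg (N : nat) (e : rel 'I_N) (x : 'I_N) : nat :=
  #|[set y | e x y]|.

Definition edges (N : nat) (e : rel 'I_N) : {set {set 'I_N}} :=
  [set [set x; y] | x in 'I_N, y in 'I_N & e x y].

(* v is a node potential of the unit-resistor network when a unit current
   enters at i and leaves at j (Kirchhoff's current law: L v = e_i - e_j). *)
Definition unit_potential (R : realFieldType) (N : nat) (e : rel 'I_N)
    (i j : 'I_N) (v : 'I_N -> R) : Prop :=
  forall x : 'I_N,
    (deg e x)%:R * v x - \sum_(y < N | e x y) v y
      = (x == i)%:R - (x == j)%:R.

Definition effective_resistance (R : realFieldType) (N : nat) (e : rel 'I_N)
    (Rm : 'I_N -> 'I_N -> R) : Prop :=
  forall i j : 'I_N, exists v : 'I_N -> R,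
    unit_potential e i j v /\ Rm i j = v i - v j.

Definition add_deg_kirchhoff (R : realFieldType) (N : nat) (e : rel 'I_N)
    (Rm : 'I_N -> 'I_N -> R) : R :=
  \sum_(i < N) \sum_(j < N | (i < j)%N)
     ((deg e i)%:R + (deg e j)%:R) * Rm i j.

From mathcomp Require Import all_boot all_order all_algebra.
From mathcomp Require Import ring lra.
Set Implicit Arguments. Unset Strict Implicit. Unset Printing Implicit Defensive.
Import Order.TTheory GRing.Theory Num.Theory.
Local Open Scope ring_scope.

(* The potential v of a unit current from i to j satisfies, for every test potential u,
   v i - v j >= 2 (u i - u j) - <u, L u>, because the Dirichlet energy of v - u is
   nonnegative. Testing with u = e_i / d_i - e_j / d_j gives
   R_ij >= 1/d_i + 1/d_j - 2 a_ij / (d_i d_j). Weighted by d_i + d_j and summed over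
   all pairs, these bounds add up to N (N - 4) + (sum_j d_j) (sum_j 1/d_j), and
   sum_j d_j = 2 |E|. *)

Lemma sum_ltn_pairs_sym (V : nmodType) (N : nat) (F : 'I_N -> 'I_N -> V) :
  (forall i j, F i j = F j i) ->
  \sum_(i < N) \sum_(j < N) F i j
    = (\sum_(i < N) \sum_(j < N | (i < j)%N) F i j) *+ 2 + \sum_(i < N) F i i.
Proof.
move=> F_sym.
have split_row i : \sum_(j < N) F i j
    = \sum_(j < N | (i < j)%N) F i j + \sum_(j < N | (j < i)%N) F i j + F i i.
  rewrite (bigID (fun j : 'I_N => (i < j)%N)) /= -addrA; congr (_ + _).
  rewrite (bigD1 i) ?ltnn //= addrC; congr (_ + _); apply: eq_bigl => j.
  by rewrite -val_eqE /= ltnNge leq_eqVlt negb_or; case: ltngtP.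
rewrite (eq_bigr _ (fun i _ => split_row i)) !big_split /= mulr2n; congr (_ + _ + _).
rewrite (exchange_big_dep xpredT) //=; apply: eq_bigr => i _.
by apply: eq_bigr => j _; rewrite F_sym.
Qed.

Lemma sum_delta_mull (R : pzSemiRingType) (N : nat) (F : 'I_N -> R) i :
  \sum_(x < N) (x == i)%:R * F x = F i.
Proof.
rewrite (bigD1 i) //= eqxx mul1r big1 ?addr0 // => x /negbTE ->; exact: mul0r.
Qed.

Lemma sum_delta_mulr (R : pzSemiRingType) (N : nat) (P : pred 'I_N) (c : R) j :
  \sum_(y < N | P y) (y == j)%:R * c = (P j)%:R * c.
Proof.
rewrite big_mkcond (bigD1 j) //= eqxx big1 ?addr0; first by case: (P j); rewrite ?mul0r.
by move=> y /negbTE ->; case: (P y); rewrite ?mul0r.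
Qed.

Lemma ord_le1_eq (N : nat) (x y : 'I_N) : (N <= 1)%N -> x = y.
Proof.
move=> N_le1; have ord0 (z : 'I_N) : val z = 0%N.
  by apply/eqP; rewrite -leqn0 -ltnS (leq_trans (ltn_ord z)).
by apply: val_inj; rewrite !ord0.
Qed.

Section GraphLaplacian.

Variables (R : realFieldType) (N : nat) (e : rel 'I_N).
Hypotheses (e_sym : symmetric e) (e_irr : irreflexive e).

Definition laplacian (g : 'I_N -> R) (x : 'I_N) : R :=
  (deg e x)%:R * g x - \sum_(y < N | e x y) g y.

Definition dirichlet (f g : 'I_N -> R) : R :=
  \sum_(x < N) \sum_(y < N | e x y) (f x - f y) * (g x - g y).

Lemma natr_deg x : (deg e x)%:R = \sum_(y < N | e x y) (1 : R).
Proof. by rewrite /deg -sum1_card natr_sum; apply: eq_bigl => y; rewrite inE. Qed.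

Lemma natr_deg_sum_adj x : (deg e x)%:R = \sum_(y < N) ((e x y)%:R : R).
Proof. by rewrite natr_deg big_mkcond; apply: eq_bigr => y _; case: (e x y). Qed.

Lemma sum_adj_sym (F : 'I_N -> 'I_N -> R) :
  \sum_(x < N) \sum_(y < N | e x y) F x y = \sum_(x < N) \sum_(y < N | e x y) F y x.
Proof.
rewrite (exchange_big_dep xpredT) //=; apply: eq_bigr => x _.
by apply: eq_bigl => y; rewrite e_sym.
Qed.

Lemma dirichlet_laplacian f g : dirichlet f g = 2 * \sum_(x < N) f x * laplacian g x.
Proof.
have row x : f x * laplacian g x = \sum_(y < N | e x y) f x * (g x - g y).
  by rewrite /laplacian natr_deg mulr_suml -sumrB mulr_sumr; apply: eq_bigr => y _; ring.
rewrite (eq_bigr _ (fun x _ => row x)) /dirichlet.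
rewrite (eq_bigr (fun x => \sum_(y < N | e x y) f x * (g x - g y)
                        + \sum_(y < N | e x y) f y * (g y - g x))); last first.
  by move=> x _; rewrite -big_split; apply: eq_bigr => y _ /=; ring.
by rewrite big_split /= (sum_adj_sym (fun x y => f y * (g y - g x))) mulr_natl mulr2n.
Qed.

Lemma dirichlet_ge0 f : 0 <= dirichlet f f.
Proof. by apply: sumr_ge0 => x _; apply: sumr_ge0 => y _; rewrite -expr2 sqr_ge0. Qed.

Lemma dirichlet_sqrB u v :
  dirichlet (fun x => v x - u x) (fun x => v x - u x)
    = dirichlet v v - 2 * dirichlet u v + dirichlet u u.
Proof.
rewrite /dirichlet mulr_sumr -sumrB -big_split; apply: eq_bigr => x _ /=.
by rewrite mulr_sumr -sumrB -big_split; apply: eq_bigr => y _ /=; ring.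
Qed.

Lemma unit_potential_pairing i j v f : unit_potential e i j v ->
  \sum_(x < N) f x * laplacian v x = f i - f j.
Proof.
move=> hv; rewrite (eq_bigr (fun x => (x == i)%:R * f x - (x == j)%:R * f x)).
  by rewrite sumrB !sum_delta_mull.
by move=> x _; rewrite [laplacian v x]hv; ring.
Qed.

Lemma unit_potential_drop_ge i j v u : unit_potential e i j v ->
  2 * (u i - u j) - \sum_(x < N) u x * laplacian u x <= v i - v j.
Proof.
move=> hv; have := dirichlet_ge0 (fun x => v x - u x).
by rewrite dirichlet_sqrB !dirichlet_laplacian !(unit_potential_pairing _ hv); lra.
Qed.

Definition dipole (i j : 'I_N) (a b : R) (x : 'I_N) : R :=
  (x == i)%:R * a - (x == j)%:R * b.

Lemma dipole_energy i j a b : i != j ->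
  \sum_(x < N) dipole i j a b x * laplacian (dipole i j a b) x
    = (deg e i)%:R * a ^+ 2 + 2 * a * b * (e i j)%:R + (deg e j)%:R * b ^+ 2.
Proof.
move=> /negbTE neq_ij; have neq_ji : (j == i) = false by rewrite eq_sym.
rewrite (eq_bigr (fun x => (x == i)%:R * (a * laplacian (dipole i j a b) x)
                        - (x == j)%:R * (b * laplacian (dipole i j a b) x))); last first.
  by move=> x _; rewrite {1}/dipole; ring.
rewrite sumrB !sum_delta_mull /laplacian /dipole !eqxx neq_ij neq_ji /=.
by rewrite !sumrB !sum_delta_mulr !e_irr (e_sym j i) /=; ring.
Qed.

Lemma unit_potential_isolated i j (v : 'I_N -> R) x : unit_potential e i j v ->
  deg e x = 0%N -> (x == i) = (x == j).
Proof.
move=> hv deg0; have := hv x; rewrite deg0 mul0r big_pred0 => [|y]; last first.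
  by move/cards0_eq/setP: deg0 => /(_ y); rewrite !inE.
by rewrite subr0 => /esym/eqP; rewrite subr_eq0 eqr_nat; case: (x == i); case: (x == j).
Qed.

Lemma unit_potential_drop_ge_inv_deg i j (v : 'I_N -> R) :
  i != j -> unit_potential e i j v ->
  ((deg e i)%:R)^-1 + ((deg e j)%:R)^-1
    - 2 * (e i j)%:R * ((deg e i)%:R)^-1 * ((deg e j)%:R)^-1 <= v i - v j.
Proof.
move=> neq_ij hv.
set a := ((deg e i)%:R)^-1; set b := ((deg e j)%:R)^-1.
have deg_neq0 x : (x == i) != (x == j) -> (deg e x)%:R != 0 :> R.
  move=> src_or_sink; rewrite pnatr_eq0; apply: contra src_or_sink.
  by move=> /eqP/(unit_potential_isolated hv) ->.
have di : (deg e i)%:R != 0 :> R by apply: deg_neq0; rewrite eqxx (negbTE neq_ij).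
have dj : (deg e j)%:R != 0 :> R by apply: deg_neq0; rewrite eqxx (eq_sym j) (negbTE neq_ij).
have := unit_potential_drop_ge (dipole i j a b) hv.
rewrite dipole_energy // /dipole !eqxx (negbTE neq_ij) (eq_sym j) (negbTE neq_ij).
suff -> : a + b - 2 * (e i j)%:R * a * b = 2 * ((1 * a - 0 * b) - (0 * a - 1 * b))
  - ((deg e i)%:R * a ^+ 2 + 2 * a * b * (e i j)%:R + (deg e j)%:R * b ^+ 2) by [].
by rewrite /a /b; field; rewrite di dj.
Qed.

Lemma sum_adj_weight (w : 'I_N -> R) : (forall x, (deg e x)%:R * w x = 1) ->
  \sum_(i < N) \sum_(j < N) (e i j)%:R * w i = N%:R.
Proof.
move=> deg_w; under eq_bigr => i _ do rewrite -mulr_suml -natr_deg_sum_adj deg_w.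
by rewrite sumr_const card_ord.
Qed.

Lemma sum_ltn_pairs_inv_deg (w : 'I_N -> R) : (forall x, (deg e x)%:R * w x = 1) ->
  \sum_(i < N) \sum_(j < N | (i < j)%N)
      ((deg e i)%:R + (deg e j)%:R) * (w i + w j - 2 * (e i j)%:R * w i * w j)
    = N%:R * (N%:R - 4) + (\sum_(i < N) (deg e i)%:R) * \sum_(j < N) w j.
Proof.
move=> deg_w.
pose G i j := ((deg e i)%:R + (deg e j)%:R) * (w i + w j - 2 * (e i j)%:R * w i * w j).
have G_sym i j : G i j = G j i by rewrite /G e_sym; ring.
have G_expand i j : G i j = 2 + (deg e i)%:R * w j + (deg e j)%:R * w i
    - 2 * ((e i j)%:R * w i) - 2 * ((e j i)%:R * w j).
  rewrite (e_sym j i); transitivity ((deg e i)%:R * w i + (deg e j)%:R * w j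
      + (deg e i)%:R * w j + (deg e j)%:R * w i
      - 2 * (e i j)%:R * ((deg e i)%:R * w i) * w j
      - 2 * (e i j)%:R * ((deg e j)%:R * w j) * w i); first by rewrite /G; ring.
  by rewrite !deg_w; ring.
have full : \sum_(i < N) \sum_(j < N) G i j
    = 2 * N%:R * N%:R + 2 * ((\sum_(i < N) (deg e i)%:R) * \sum_(j < N) w j) - 4 * N%:R.
  under eq_bigr => i _ do under eq_bigr => j _ do rewrite G_expand.
  under eq_bigr => i _ do rewrite !(sumrB, big_split) -!mulr_sumr /=.
  rewrite !(sumrB, big_split) -!mulr_sumr /= -mulr_suml.
  have cross : \sum_(i < N) \sum_(j < N) (deg e j)%:R * w i
      = (\sum_(i < N) (deg e i)%:R) * \sum_(j < N) w j.
    by under eq_bigr => i _ do rewrite -mulr_suml; rewrite -mulr_sumr.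
  have adj_swap : \sum_(i < N) \sum_(j < N) (e j i)%:R * w j = N%:R.
    by rewrite exchange_big; apply: sum_adj_weight.
  rewrite cross adj_swap sum_adj_weight //.
  under eq_bigr => i _ do rewrite sumr_const card_ord.
  by rewrite sumr_const card_ord -mulr_natr; ring.
have diag : \sum_(i < N) G i i = 4 * N%:R.
  rewrite (eq_bigr (fun _ => 4)) ?sumr_const ?card_ord ?mulr_natr // => i _.
  by transitivity (4 * ((deg e i)%:R * w i)); [rewrite /G e_irr /=; ring | rewrite deg_w mulr1].
have := sum_ltn_pairs_sym G_sym; rewrite full diag mulr2n.
set S := \sum_(i < N) \sum_(j < N | (i < j)%N) G i j.
set P := _ * \sum_(j < N) w j.
move=> sum_eq; lra.
Qed.

Lemma sum_deg_pairs :
  (\sum_(x < N) deg e x = (\sum_(i < N) \sum_(j < N | (i < j)%N) e i j) * 2)%N.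
Proof.
have deg_sum x : deg e x = (\sum_(y < N) e x y)%N.
  by rewrite /deg -sum1_card big_mkcond; apply: eq_bigr => y _; rewrite inE; case: (e x y).
rewrite (eq_bigr _ (fun x _ => deg_sum x)).
rewrite (@sum_ltn_pairs_sym nat N (fun i j => nat_of_bool (e i j))) => [|i j]; last first.
  by rewrite e_sym.
rewrite [X in _ + X]big1 => [|i _]; last by rewrite e_irr.
by rewrite addr0 mulr2n muln2 -addnn.
Qed.

Lemma card_edges_le_pairs :
  (#|edges e| <= \sum_(i < N) \sum_(j < N | (i < j)%N) e i j)%N.
Proof.
pose A := [set p : 'I_N * 'I_N | e p.1 p.2 && (p.1 < p.2)%N].
have -> : (\sum_(i < N) \sum_(j < N | (i < j)%N) e i j = #|A|)%N.
  rewrite -sum1_card pair_big_dep /= big_mkcond [RHS]big_mkcond.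
  by apply: eq_bigr => p _; rewrite inE andbC; case: (_ < _)%N; case: (e _ _).
apply: leq_trans (leq_imset_card (fun p : 'I_N * 'I_N => [set p.1; p.2]) A).
apply: subset_leq_card; apply/subsetP => s /imset2P [x y _]; rewrite inE => /andP [_ exy] ->.
case: (ltngtP x y) => [lt_xy | gt_xy | /val_inj eq_xy].
- by apply/imsetP; exists (x, y); rewrite ?inE /= ?exy ?lt_xy.
- apply/imsetP; exists (y, x); last by rewrite /= setUC.
  by rewrite inE /= (e_sym y) exy gt_xy.
- by rewrite eq_xy e_irr in exy.
Qed.

Lemma double_card_edges_le_sum_deg : (2 * #|edges e| <= \sum_(x < N) deg e x)%N.
Proof. by rewrite sum_deg_pairs mulnC leq_mul2r card_edges_le_pairs orbT. Qed.

Lemma effective_resistance_deg_neq0 (Rm : 'I_N -> 'I_N -> R) x :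
  (1 < N)%N -> effective_resistance e Rm -> deg e x != 0%N.
Proof.
move=> N_gt1 hR; have [y neq_yx] : exists y, y != x.
  have : (0 < #|predC1 x|)%N by rewrite cardC1 card_ord -ltnS (ltn_predK N_gt1).
  by case/card_gt0P => y; exists y.
have [v [hv _]] := hR x y.
by apply/eqP => /(unit_potential_isolated hv); rewrite eqxx eq_sym (negbTE neq_yx).
Qed.

End GraphLaplacian.

Theorem theorem1 (R : realFieldType) (N : nat) (e : rel 'I_N)
    (Rm : 'I_N -> 'I_N -> R) :
  simple_graph e -> connected_graph e -> effective_resistance e Rm ->
  (N%:R * (N%:R - 4)) + 2 * (#|edges e|)%:R * \sum_(j < N) ((deg e j)%:R)^-1
    <= add_deg_kirchhoff e Rm.
Proof.
move=> [e_sym e_irr] _ hR.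
have [N_gt1 | N_le1] := ltnP 1 N; last first.
  have deg0 x : deg e x = 0%N.
    apply/eqP; rewrite cards_eq0; apply/eqP/setP => y.
    by rewrite !inE (ord_le1_eq y x N_le1) e_irr.
  rewrite big1 => [|j _]; last by rewrite deg0 invr0.
  rewrite /add_deg_kirchhoff big1 => [|i _]; last first.
    by rewrite big1 // => j; rewrite (ord_le1_eq i j N_le1) ltnn.
  by rewrite mulr0 addr0 mulr_ge0_le0 ?ler0n // subr_le0 ler_nat (leq_trans N_le1).
pose w x := ((deg e x)%:R : R)^-1.
have deg_w x : (deg e x)%:R * w x = 1.
  by rewrite mulfV // pnatr_eq0 (effective_resistance_deg_neq0 x N_gt1 hR).
have edges_le : 2 * (#|edges e|)%:R * \sum_(j < N) w j
    <= (\sum_(i < N) (deg e i)%:R) * \sum_(j < N) w j.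
  apply: ler_wpM2r; first by apply: sumr_ge0 => j _; rewrite invr_ge0 ler0n.
  by rewrite -natr_sum -(natrM _ 2) ler_nat double_card_edges_le_sum_deg.
apply: le_trans (_ : _ <= N%:R * (N%:R - 4)
  + (\sum_(i < N) (deg e i)%:R) * \sum_(j < N) w j) _; first by rewrite lerD2l.
rewrite -(sum_ltn_pairs_inv_deg e_sym e_irr deg_w) /add_deg_kirchhoff.
apply: ler_sum => i _; apply: ler_sum => j lt_ij.
have [v [hv ->]] := hR i j.
apply: ler_wpM2l; first by rewrite addr_ge0 ?ler0n.
apply: (unit_potential_drop_ge_inv_deg e_sym e_irr) hv.
by apply: contraTneq lt_ij => ->; rewrite ltnn.
Qed.
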